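(* Let $A$ be an $n\times n$ matrix with a designated set of large positions, and let $(X,Y)$ be a $q$-good restriction having a $p$-strong line, where $0\le p<1$. Let $m=|X|$ and $\varrho=2q/(1-p)$. If $m\ge6$, $(1-p)m>1$, $2\varrho m>1$ and $\varrho\le1/2$, then that line is in fact $(q+3\varrho)$-strong for $(X,Y)$.
   Context: Let $A=(a_{ij})_{i,j\in[n]}$ with a designated set $L\subseteq[n]\times[n]$ of large positions. A restriction is $(X,Y)$ with $X,Y\subseteq[n]$, $|X|=|Y|$; a generalized diagonal of $A[X,Y]$ is $\{(i,\sigma(i)):i\in X\}$ for a bijection $\sigma:X\to Y$, random meaning uniform $\sigma$; it is good if it contains exactly one large position; $(X,Y)$ is $q$-good if a random generalized diagonal is good with probability $\ge1-q$. For $i\in X$, row $i$ is $p$-strong for $(X,Y)$ if at least $(1-p)|Y|$ of the positions $\{(i,j):j\in Y\}$ are large; column $j\in Y$ is $p$-strong if at least $(1-p)|X|$ of $\{(i,j):i\in X\}$ are large. A $p$-strong line is a $p$-strong row or column. *)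

From HB Require Import structures.
From mathcomp Require Import all_boot all_order all_algebra.
Set Implicit Arguments. Unset Strict Implicit. Unset Printing Implicit Defensive.
Import Order.TTheory GRing.Theory Num.Theory.
Local Open Scope ring_scope.

Section Defs.
Variable n : nat.
Local Notation pos := ('I_n * 'I_n)%type.

(* A generalized diagonal of A[X,Y]: the graph {(i, sigma i) : i in X} of a
   bijection sigma : X -> Y, represented as a set of positions.  Graphs of
   bijections X -> Y are in one-to-one correspondence with bijections, so the
   uniform distribution on bijections is the uniform distribution on these sets. *)
Definition is_gdiag (X Y : {set 'I_n}) (D : {set pos}) : bool :=
  [&& D \subset setX X Y,
      [forall x in X, #|[set y | (x, y) \in D]| == 1%N] &
      [forall y in Y, #|[set x | (x, y) \in D]| == 1%N]].

Definition gdiags (X Y : {set 'I_n}) : {set {set pos}} :=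
  [set D | is_gdiag X Y D].

Definition good_diag (L : {set pos}) (D : {set pos}) : bool :=
  #|D :&: L| == 1%N.

Definition prob_good (R : numFieldType) (L : {set pos}) (X Y : {set 'I_n}) : R :=
  (#|[set D in gdiags X Y | good_diag L D]|)%:R / (#|gdiags X Y|)%:R.

Definition restriction (X Y : {set 'I_n}) : Prop := #|X| = #|Y|.

Definition q_good (R : numFieldType) (q : R) (L : {set pos}) (X Y : {set 'I_n}) : Prop :=
  restriction X Y /\ 1 - q <= prob_good R L X Y.

(* A line: a row (inl i) or a column (inr j). *)
Definition line := ('I_n + 'I_n)%type.

Definition strong_line (R : numFieldType) (p : R) (L : {set pos})
  (X Y : {set 'I_n}) (l : line) : Prop :=
  match l with
  | inl i => i \in X /\
      (1 - p) * (#|Y|)%:R <= (#|[set j in Y | (i, j) \in L]|)%:R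
  | inr j => j \in Y /\
      (1 - p) * (#|X|)%:R <= (#|[set i in X | (i, j) \in L]|)%:R
  end.
End Defs.

From HB Require Import structures.
From mathcomp Require Import all_boot all_order all_algebra perm.
From mathcomp Require Import zify lra.
Import Order.TTheory GRing.Theory Num.Theory.
Set Implicit Arguments. Unset Strict Implicit. Unset Printing Implicit Defensive.

(* By transposition it suffices to treat a row i.  Let S be its set of large
   positions, k = |S| and m = |X| = |Y|.  View a diagonal as a bijection
   sigma : X -> Y and let swap D r exchange the columns of rows i and r.
   Two double counts along swaps give
     (m - k) #{sigma(i) in S}       <= k #{sigma(i) notin S},
     (k - 1) #{good, sigma(i) notin S} <= (m - k) #{bad, sigma(i) in S},
   the second because a good diagonal avoiding S at row i becomes bad when
   row i is swapped with any of the k - 1 rows r hitting S other than the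
   row of its unique large position.  Together they bound the probability
   of a bad diagonal below by (m - k)(k - 1) / (m (m - 1)); since it is at
   most q and k >= (1 - p) m > 1, real arithmetic yields m - k <= rho m. *)

Section DoubleCounting.
Variables (T I : finType).

Definition fibered (A : {set T}) (F : T -> {set I}) : {set T * I} :=
  [set u | (u.1 \in A) && (u.2 \in F u.1)].

Lemma card_fibered A F : #|fibered A F| = \sum_(a in A) #|F a|.
Proof.
rewrite -sum1_card (eq_bigr (fun a => \sum_(r in F a) 1)) => [|a _].
  by rewrite pair_big_dep; apply: eq_bigl => u; rewrite inE.
by rewrite sum1_card.
Qed.

Lemma double_count (f g : T -> I -> T) (A B : {set T}) (F G : T -> {set I})
    (a b : nat) :
  (forall D, D \in A -> a <= #|F D|) ->
  (forall D, D \in B -> #|G D| <= b) ->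
  (forall D r, D \in A -> r \in F D -> f D r \in B /\ r \in G (f D r)) ->
  (forall D r, D \in A -> r \in F D -> g (f D r) r = D) ->
  a * #|A| <= b * #|B|.
Proof.
move=> Fa Gb fAB gK.
set h := fun u : T * I => (f u.1 u.2, u.2).
have h_inj : {in fibered A F &, injective h}.
  move=> [D r] [D' r'] /[!inE] /andP[/= DA rF] /andP[/= D'A r'F] [e er].
  by rewrite -er in e r'F *; rewrite -(gK _ _ DA rF) e gK.
have h_sub : h @: fibered A F \subset fibered B G.
  apply/subsetP=> _ /imsetP[[D r] /[!inE] /andP[/= DA rF] ->].
  by case: (fAB _ _ DA rF) => -> ->.
rewrite mulnC -sum_nat_const [b * _]mulnC -sum_nat_const.
apply: (@leq_trans (\sum_(D in A) #|F D|)); first exact: leq_sum.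
apply: (@leq_trans (\sum_(D in B) #|G D|)); last exact: leq_sum.
rewrite -!card_fibered -(card_in_imset h_inj); exact: subset_leq_card.
Qed.

End DoubleCounting.

Section DiagonalsAsGraphs.
Variable n : nat.
Local Notation pos := ('I_n * 'I_n)%type.

Definition diag_fun (D : {set pos}) (x : 'I_n) : 'I_n :=
  odflt x [pick y | (x, y) \in D].

Definition graph (X : {set 'I_n}) (f : 'I_n -> 'I_n) : {set pos} :=
  [set u | (u.1 \in X) && (u.2 == f u.1)].

Variables (X Y : {set 'I_n}).

Lemma diag_funP D x : is_gdiag X Y D -> x \in X -> (x, diag_fun D x) \in D.
Proof.
case/and3P=> _ /forall_inP rowsD _ xX.
have /cards1P[y Hy] := rowsD x xX.
rewrite /diag_fun; case: pickP => [//|/(_ y) noy].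
by move: (set11 y); rewrite -Hy inE noy.
Qed.

Lemma mem_gdiag D u :
  is_gdiag X Y D -> (u \in D) = (u.1 \in X) && (u.2 == diag_fun D u.1).
Proof.
move=> DG; apply/idP/andP => [uD|[u1X /eqP e]]; last first.
  by rewrite [u]surjective_pairing e diag_funP.
have := DG; case/and3P=> /subsetP DXY /forall_inP rowsD _.
have u1X : u.1 \in X by move: (DXY u uD); rewrite [u]surjective_pairing inE => /andP[].
have /cards1P[y Hy] := rowsD _ u1X.
have : u.2 \in [set y0 | (u.1, y0) \in D] by rewrite inE -surjective_pairing.
have : diag_fun D u.1 \in [set y0 | (u.1, y0) \in D] by rewrite inE diag_funP.
by rewrite Hy !inE => /eqP-> /eqP->.
Qed.

Lemma gdiag_graph D : is_gdiag X Y D -> D = graph X (diag_fun D).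
Proof. by move=> DG; apply/setP=> u; rewrite inE mem_gdiag. Qed.

Lemma diag_fun_in D x : is_gdiag X Y D -> x \in X -> diag_fun D x \in Y.
Proof.
move=> DG xX; have := DG; case/and3P=> /subsetP DXY _ _.
by move: (DXY _ (diag_funP DG xX)); rewrite inE => /andP[].
Qed.

Lemma diag_fun_inj D : is_gdiag X Y D -> {in X &, injective (diag_fun D)}.
Proof.
move=> DG x1 x2 x1X x2X e; have := DG; case/and3P=> _ _ /forall_inP colsD.
have /cards1P[z Hz] := colsD _ (diag_fun_in DG x1X).
have : x1 \in [set x | (x, diag_fun D x1) \in D] by rewrite inE diag_funP.
have : x2 \in [set x | (x, diag_fun D x1) \in D] by rewrite inE e diag_funP.
by rewrite Hz !inE => /eqP-> /eqP->.
Qed.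

Lemma image_full f : {in X, forall x, f x \in Y} -> {in X &, injective f} ->
  #|X| = #|Y| -> f @: X = Y.
Proof.
move=> fY finj XY; apply/eqP; rewrite eqEcard card_in_imset // XY leqnn andbT.
by apply/subsetP=> _ /imsetP[x xX ->]; apply: fY.
Qed.

Lemma graph_gdiag f : {in X, forall x, f x \in Y} -> {in X &, injective f} ->
  #|X| = #|Y| -> is_gdiag X Y (graph X f).
Proof.
move=> fY finj XY; apply/and3P; split.
- by apply/subsetP=> u /[!inE] /andP[u1X /eqP->]; rewrite u1X fY.
- apply/forall_inP=> x xX; apply/cards1P; exists (f x).
  by apply/setP=> y; rewrite !inE /= xX.
- apply/forall_inP=> y; rewrite -(image_full fY finj XY) => /imsetP[x0 x0X ->].
  apply/cards1P; exists x0; apply/setP=> x; rewrite !inE /=.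
  apply/andP/eqP => [[xX /eqP e]|->]; last by rewrite x0X.
  by apply: finj; rewrite ?e.
Qed.

Lemma diag_fun_graph f x : x \in X -> diag_fun (graph X f) x = f x.
Proof.
move=> xX; rewrite /diag_fun; case: pickP => [y|/(_ (f x))].
  by rewrite inE /= xX => /eqP.
by rewrite inE /= xX eqxx.
Qed.

Lemma eq_graph f g : {in X, f =1 g} -> graph X f = graph X g.
Proof.
move=> fg; apply/setP=> u; rewrite !inE.
by case u1X: (u.1 \in X); rewrite //= fg.
Qed.

Lemma in_gdiags D : (D \in gdiags X Y) = is_gdiag X Y D.
Proof. by rewrite inE. Qed.

Definition hits (D : {set pos}) (T : {set 'I_n}) : {set 'I_n} :=
  [set r in X | diag_fun D r \in T].

Lemma in_hits D (T : {set 'I_n}) r :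
  (r \in hits D T) = (r \in X) && (diag_fun D r \in T).
Proof. by rewrite inE. Qed.

Lemma card_hits D (T : {set 'I_n}) : #|X| = #|Y| -> is_gdiag X Y D -> T \subset Y ->
  #|hits D T| = #|T|.
Proof.
move=> XY DG TY; have Dinj := diag_fun_inj DG.
rewrite -(card_in_imset (f := diag_fun D)); last first.
  by move=> x1 x2 /[!inE] /andP[x1X _] /andP[x2X _]; apply: Dinj.
congr #|pred_of_set _|; apply/setP=> y; apply/imsetP/idP => [[x] /[!inE] /andP[_ xT] -> //|yT].
move: (subsetP TY _ yT); rewrite -(image_full (fun x => diag_fun_in DG (x := x)) Dinj XY).
by case/imsetP=> x xX yx; exists x; rewrite // inE xX -yx.
Qed.

End DiagonalsAsGraphs.

Lemma card_split (T : finType) (A : {set T}) (P : pred T) :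
  #|[set x in A | P x]| + #|[set x in A | ~~ P x]| = #|A|.
Proof.
by rewrite -(cardsID [set x | P x] A); congr (_ + _); apply: eq_card => x;
  rewrite !inE andbC.
Qed.

(* The arithmetic combining the two swap inequalities below: among the
   diagonals, [ga + ba] avoid the large positions of row [i] ([ga] of them
   good) and [nm] meet them ([bm] of them bad); then the bad diagonals
   [ba + bm] are a fraction at least [(m - k)(k - 1) / (m (m - 1))]. *)
Lemma combine_counts (m k ga ba nm bm : nat) : k <= m ->
  (m - k) * nm <= k * (ga + ba) -> k.-1 * ga <= (m - k) * bm ->
  (m - k) * k.-1 * (ga + ba + nm) <= m * m.-1 * (ba + bm).
Proof.
move=> km meet_le good_le.
have avoid_ge : (m - k) * (ga + ba + nm) <= m * (ga + ba) by nia.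
have avoid_le : k.-1 * (ga + ba) <= m.-1 * (ba + bm) by nia.
nia.
Qed.

Section RowCounting.
Variable n : nat.
Local Notation pos := ('I_n * 'I_n)%type.
Variables (X Y : {set 'I_n}) (L : {set pos}) (i : 'I_n).
Hypothesis XY : #|X| = #|Y|.
Hypothesis iX : i \in X.

Definition swap (D : {set pos}) (r : 'I_n) : {set pos} :=
  graph X (diag_fun D \o tperm i r).

Lemma tperm_in r x : r \in X -> x \in X -> tperm i r x \in X.
Proof. by move=> rX xX; case: tpermP => // ->. Qed.

Lemma swap_gdiag D r : is_gdiag X Y D -> r \in X -> is_gdiag X Y (swap D r).
Proof.
move=> DG rX; apply: graph_gdiag => // [x xX|x1 x2 x1X x2X /= e].
  by apply: (diag_fun_in DG); apply: tperm_in.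
by apply: (perm_inj (s := tperm i r)); apply: (diag_fun_inj DG); rewrite ?tperm_in.
Qed.

Lemma diag_fun_swap D r x :
  x \in X -> diag_fun (swap D r) x = diag_fun D (tperm i r x).
Proof. exact: diag_fun_graph. Qed.

Lemma swapK D r : is_gdiag X Y D -> r \in X -> swap (swap D r) r = D.
Proof.
move=> DG rX; rewrite [RHS](gdiag_graph DG); apply: eq_graph => x xX /=.
by rewrite diag_fun_swap ?tperm_in // tpermK.
Qed.

Let S := [set j in Y | (i, j) \in L].
Let Avoid := [set D in gdiags X Y | diag_fun D i \notin S].
Let Meet := [set D in gdiags X Y | diag_fun D i \in S].
Let GoodAvoid := [set D in Avoid | good_diag L D].
Let BadAvoid := [set D in Avoid | ~~ good_diag L D].
Let BadMeet := [set D in Meet | ~~ good_diag L D].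
Let Bad := [set D in gdiags X Y | ~~ good_diag L D].

Lemma row_large_sub : S \subset Y.
Proof. by apply/subsetP=> j /[!inE] /andP[]. Qed.

Lemma card_row_small : #|Y :\: S| = #|X| - #|S|.
Proof. by rewrite cardsD (setIidPr row_large_sub) XY. Qed.

(* Swapping rows [i] and [r] turns a diagonal meeting [S] at row [i], with
   [r] sent outside [S], into one avoiding [S] at row [i] with [r] sent into
   [S]; counting both sides gives [(m - k) #|Meet| <= k #|Avoid|]. *)
Lemma swap_balance : (#|X| - #|S|) * #|Meet| <= #|S| * #|Avoid|.
Proof.
rewrite -card_row_small.
apply: (double_count (f := swap) (g := swap) (F := fun D => hits X D (Y :\: S))
                     (G := fun D => hits X D S)) => [D|D|D r|D r].
- by rewrite inE in_gdiags => /andP[DG _]; rewrite (card_hits XY DG) // subsetDl.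
- by rewrite inE in_gdiags => /andP[DG _]; rewrite (card_hits XY DG) // row_large_sub.
- rewrite inE in_gdiags => /andP[DG DiS]; rewrite in_hits in_setD => /and3P[rX rNS _].
  rewrite inE in_gdiags in_hits swap_gdiag // !diag_fun_swap //.
  by rewrite tpermL tpermR rX rNS DiS.
- by rewrite inE in_gdiags in_hits => /andP[DG _] /andP[rX _]; rewrite swapK.
Qed.

(* A good diagonal [D] avoiding [S] in row [i] has its unique large position
   [w] outside row [i]; exchanging row [i] with any row [r <> w.1] hitting
   [S] creates a second large position, so at least [k - 1] swaps are bad. *)
Lemma bad_swaps D : D \in GoodAvoid ->
  #|S|.-1 <= #|[set r in hits X D S | ~~ good_diag L (swap D r)]|.
Proof.
rewrite inE => /andP[]; rewrite inE in_gdiags => /andP[DG DiS] /cards1P[w Dw].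
have /setIP[wD wL] : w \in D :&: L by rewrite Dw set11.
move: (wD); rewrite (mem_gdiag _ DG) => /andP[w1X /eqP w2].
have w1i : w.1 != i.
  apply: contra DiS => /eqP wi.
  by rewrite inE (diag_fun_in DG iX) -wi -w2 -surjective_pairing.
rewrite -(card_hits XY DG row_large_sub) (cardsD1 w.1) -subn1 leq_subLR leq_add ?leq_b1 //.
apply/subset_leq_card/subsetP=> r /setD1P[rw rS].
rewrite inE rS /= /good_diag.
move: rS; rewrite in_hits => /andP[rX rS].
have two : [set (i, diag_fun D r); w] \subset swap D r :&: L.
  apply/subsetP=> u /set2P[]->; rewrite inE; apply/andP; split.
  - by rewrite inE /= iX tpermL eqxx.
  - by case/setIdP: rS.
  - have iw1 : i != w.1 by rewrite eq_sym.
    by rewrite inE /= w1X (tpermD iw1 rw) -w2 eqxx.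
  - exact: wL.
have iw : (i, diag_fun D r) != w by apply: contraNneq w1i => <-.
move/subset_leq_card: two; rewrite cards2 iw => le2.
by apply/eqP => e; rewrite e in le2.
Qed.

Lemma good_to_bad : #|S|.-1 * #|GoodAvoid| <= (#|X| - #|S|) * #|BadMeet|.
Proof.
rewrite -card_row_small.
apply: (double_count (f := swap) (g := swap) (G := fun D => hits X D (Y :\: S))
  (F := fun D => [set r in hits X D S | ~~ good_diag L (swap D r)])) => [D|D|D r|D r].
- exact: bad_swaps.
- rewrite inE => /andP[]; rewrite inE in_gdiags => /andP[DG _] _.
  by rewrite (card_hits XY DG) // subsetDl.
- rewrite inE => /andP[]; rewrite inE in_gdiags => /andP[DG DiS] _.
  rewrite inE in_hits => /andP[/andP[rX rS] bad].
  rewrite inE bad andbT inE in_gdiags swap_gdiag // in_hits in_setD.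
  by rewrite !diag_fun_swap // tpermL tpermR rX rS DiS (diag_fun_in DG iX).
- rewrite inE => /andP[]; rewrite inE in_gdiags => /andP[DG _] _.
  by rewrite inE in_hits => /andP[/andP[rX _] _]; rewrite swapK.
Qed.

Lemma bad_count :
  (#|X| - #|S|) * #|S|.-1 * #|gdiags X Y| <= #|X| * #|X|.-1 * #|Bad|.
Proof.
have kY : #|S| <= #|X| by rewrite XY subset_leq_card // row_large_sub.
have splitN : #|Avoid| + #|Meet| = #|gdiags X Y|.
  by rewrite addnC; apply: card_split.
have splitT : #|GoodAvoid| + #|BadAvoid| = #|Avoid| by apply: card_split.
have splitB : #|BadAvoid| + #|BadMeet| = #|Bad|.
  rewrite -(card_split Bad (fun D => diag_fun D i \in S)) addnC.
  by congr (_ + _); apply: eq_card => D; rewrite !inE andbAC.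
have balance := swap_balance; rewrite -splitT in balance.
by move: (combine_counts kY balance good_to_bad); rewrite splitT splitN splitB.
Qed.

End RowCounting.

Local Open Scope ring_scope.

(* In probabilistic terms: a random diagonal is bad with probability at least
   [(m - k)(k - 1) / (m (m - 1))].  (When there are no diagonals at all the
   probability of being good is [0] by convention and the bound is trivial.) *)
Lemma row_bad_prob (R : realFieldType) n (X Y : {set 'I_n}) (L : {set 'I_n * 'I_n}) i :
  #|X| = #|Y| -> i \in X ->
  (((#|X| - #|[set j in Y | (i, j) \in L]|) * #|[set j in Y | (i, j) \in L]|.-1)%:R : R)
    <= (1 - prob_good R L X Y) * (#|X| * #|X|.-1)%:R.
Proof.
move=> XY iX; have := bad_count L XY iX.
have := card_split (gdiags X Y) (good_diag L); rewrite /prob_good.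
set k := #|[set j in Y | (i, j) \in L]|; set N := #|gdiags X Y|.
set G := #|[set D in _ | good_diag L D]|; set B := #|[set D in _ | ~~ _]|.
move=> splitN le_count.
have [N0|N_gt0] := posnP N.
  have km : (k <= #|X|)%N by rewrite XY /k setIdE subset_leq_card ?subsetIl.
  by rewrite N0 invr0 mulr0 subr0 mul1r ler_nat leq_mul ?leq_subr // -!subn1 leq_sub2r.
have NR : (0 : R) < N%:R by rewrite ltr0n.
have probB : 1 - G%:R / N%:R = B%:R / N%:R :> R.
  by apply/eqP; rewrite subr_eq -mulrDl -natrD addnC splitN divff // lt0r_neq0.
rewrite probB mulrAC.
by rewrite ler_pdivlMr // -!natrM ler_nat (mulnC B).
Qed.

Lemma strong_from_bad (R : realFieldType) (m k p q : R) :
  0 <= p -> p < 1 -> 2 <= k -> k <= m -> (1 - p) * m <= k ->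
  (m - k) * (k - 1) <= q * (m * (m - 1)) ->
  (1 - (q + 3 * (2 * q / (1 - p)))) * m <= k.
Proof.
move=> p0 p1 k2 km hk hbad.
set rho := 2 * q / (1 - p).
have pp : 0 < 1 - p by lra.
have rhoE : rho * (1 - p) = 2 * q by rewrite /rho mulfVK // lt0r_neq0.
have q0 : 0 <= q.
  have mm : 0 < m * (m - 1) by apply: mulr_gt0; lra.
  by rewrite -(pmulr_lge0 _ mm); apply: le_trans _ hbad; apply: mulr_ge0; lra.
have rho0 : 0 <= rho by apply: divr_ge0; [apply: mulr_ge0 | ]; lra.
(* [(m - k) k <= 2 (m - k)(k - 1) <= 2 q m^2], and [(1 - p) m <= k]. *)
have hsq : (m - k) * ((1 - p) * m) <= (2 * q * m) * m.
  have : 0 <= (m - k) * (k - 2) by apply: mulr_ge0; lra.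
  have : (m - k) * ((1 - p) * m) <= (m - k) * k by apply: ler_wpM2l; lra.
  have : q * (m * (m - 1)) <= q * (m * m) by apply: ler_wpM2l; nra.
  nra.
have m0 : 0 < m by lra.
have hlin : (m - k) * (1 - p) <= rho * (1 - p) * m.
  by rewrite rhoE -(ler_pM2r m0); lra.
have : m - k <= rho * m by rewrite -(ler_pM2r pp) mulrAC.
have : 0 <= (q + 2 * rho) * m by apply: mulr_ge0; lra.
lra.
Qed.

Lemma strong_row (R : realFieldType) n (L : {set 'I_n * 'I_n}) (X Y : {set 'I_n})
    (p q : R) (i : 'I_n) :
  restriction X Y -> 1 - q <= prob_good R L X Y -> 0 <= p -> p < 1 ->
  1 < (1 - p) * (#|X|)%:R -> strong_line p L X Y (inl i) ->
  strong_line (q + 3 * (2 * q / (1 - p))) L X Y (inl i).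
Proof.
rewrite /restriction => XY hq p0 p1 hm [iX hk]; split => //.
move: hk (row_bad_prob R L XY iX); rewrite -XY.
set k := #|[set j in Y | (i, j) \in L]| => hk hbad.
have km : (k <= #|X|)%N by rewrite XY /k setIdE subset_leq_card ?subsetIl.
have k2 : (2 <= k)%N by rewrite -(ltr_nat R); lra.
have predE a : (0 < a)%N -> a.-1%:R = a%:R - 1 :> R.
  by move=> a0; rewrite -subn1 natrB.
apply: strong_from_bad => //; rewrite ?ler_nat //.
rewrite -predE ?(ltnW k2) // -predE ?(leq_trans (ltnW k2) km) //.
rewrite -natrB // -!natrM; apply: le_trans hbad _.
by rewrite ler_wpM2r ?ler0n //; lra.
Qed.

(* Transposition exchanges rows and columns: it maps diagonals of [A[X,Y]]
   to diagonals of [A^T[Y,X]], preserving goodness, so columns reduce to rows. *)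
Section Transpose.
Variable n : nat.
Local Notation pos := ('I_n * 'I_n)%type.

Definition flip (u : pos) : pos := (u.2, u.1).
Definition transpose (D : {set pos}) : {set pos} := flip @^-1: D.

Lemma flipK : involutive flip. Proof. by case. Qed.

Lemma transposeK : involutive transpose.
Proof. by move=> D; apply/setP=> u; rewrite !inE flipK. Qed.

Lemma card_transpose D : #|transpose D| = #|D|.
Proof. by rewrite card_preimset //; apply: inv_inj flipK. Qed.

Lemma gdiag_transpose (X Y : {set 'I_n}) D :
  is_gdiag Y X (transpose D) = is_gdiag X Y D.
Proof.
have sub : (transpose D \subset setX Y X) = (D \subset setX X Y).
  apply/subsetP/subsetP=> sub u; last by rewrite !inE andbC => /sub; rewrite inE.
  by move=> uD; move: (sub (flip u)); rewrite !inE flipK andbC => ->.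
have lines (Z : {set 'I_n}) (P : 'I_n -> 'I_n -> pos) :
  [forall z in Z, #|[set w | P z w \in transpose D]| == 1%N] =
  [forall z in Z, #|[set w | flip (P z w) \in D]| == 1%N].
  apply: eq_forallb => z; rewrite (@eq_card _ _ [set w | flip (P z w) \in D]) // => w.
  by rewrite !inE.
rewrite /is_gdiag sub (lines _ pair) (lines _ (fun y x => (x, y))) /=.
by congr (_ && _); rewrite andbC.
Qed.

Lemma good_transpose L D : good_diag (transpose L) (transpose D) = good_diag L D.
Proof.
rewrite /good_diag.
have -> : transpose D :&: transpose L = transpose (D :&: L).
  by apply/setP=> u; rewrite !inE.
by rewrite card_transpose.
Qed.

Lemma prob_good_transpose (R : numFieldType) L (X Y : {set 'I_n}) :
  prob_good R (transpose L) Y X = prob_good R L X Y.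
Proof.
have tr_inj := inv_inj transposeK.
have card_good : #|[set D in gdiags Y X | good_diag (transpose L) D]|
               = #|[set D in gdiags X Y | good_diag L D]|.
  rewrite -(card_preimset _ tr_inj); apply: eq_card => D.
  by rewrite !inE gdiag_transpose good_transpose.
have card_all : #|gdiags Y X| = #|gdiags X Y|.
  by rewrite -(card_preimset _ tr_inj); apply: eq_card => D; rewrite !inE gdiag_transpose.
by rewrite /prob_good card_good card_all.
Qed.

Lemma strong_line_transpose (R : numFieldType) (p : R) L (X Y : {set 'I_n}) j :
  strong_line p (transpose L) Y X (inl j) = strong_line p L X Y (inr j).
Proof.
rewrite /=; congr (_ /\ _ <= _); congr (_ %:R); apply: eq_card => i.
by rewrite !inE.
Qed.

End Transpose.

Theorem lemma2p13 (R : realFieldType) (n : nat) (L : {set 'I_n * 'I_n})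
  (X Y : {set 'I_n}) (p q : R) (l : line n) :
  q_good q L X Y ->
  0 <= p -> p < 1 ->
  strong_line p L X Y l ->
  let m : R := (#|X|)%:R in
  let rho : R := 2 * q / (1 - p) in
  6 <= m -> 1 < (1 - p) * m -> 1 < 2 * rho * m -> rho <= 1 / 2 ->
  strong_line (q + 3 * rho) L X Y l.
Proof.
move=> [XY hq] p0 p1 hl m rho _ hm _ _.
case: l hl => [i|j] hl; first exact: strong_row.
rewrite -strong_line_transpose; apply: strong_row => //.
- by rewrite prob_good_transpose.
- by rewrite -XY.
- by rewrite strong_line_transpose.
Qed.
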